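(* Let $0<c\le1<F$ and $s>0$. There exist constants $a_1,a_2,b>0$ depending only on $c$ such that at every time $t$ with $Z^t>0$, $$\mathbb E[Z^t-Z^{t+1}\mid x^t,\lambda^t]\ge \Pr[B\mid x^t,\lambda^t]\cdot a_1\big(1-c(1-Z^t/n)\big)-a_2e^{-b\lambda^t}.$$ This also holds with $Z^t-Z^{t+1}$ replaced by $\min\{1,Z^t-Z^{t+1}\}$.
   Context: Consider the SA-$(1,\lambda)$-EA on a dynamic monotone function: a function $f:\{0,1\}^n\to\mathbb R$ is monotone if $f(x)>f(y)$ whenever $x\ne y$ and $x_i\ge y_i$ for all $i$; $(f^t)_{t\ge0}$ is a sequence of monotone functions, $f^t$ possibly chosen adversarially depending on $x^t$. The algorithm (with constants $c>0$, $s>0$, $F>1$) maintains $x^t\in\{0,1\}^n$, real $\lambda^t\ge1$; in generation $t$ it creates $\lfloor\lambda^t\rceil$ (nearest integer) offspring $y^{t,j}$, each independently by flipping every bit of $x^t$ independently with probability $c/n$; $x^{t+1}$ is an offspring maximizing $f^t$ (ties uniformly at random); $\lambda^{t+1}=\max\{1,\lambda^t/F\}$ if $f^t(x^{t+1})>f^t(x^t)$, else $\lambda^{t+1}=F^{1/s}\lambda^t$. $Z^t$ is the number of zero-bits of $x^t$. $B$ is the event that some offspring of $x^t$ flips at least one zero-bit of $x^t$. *)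

From mathcomp Require Import all_boot all_order all_algebra.
From mathcomp Require Import all_classical all_reals all_analysis.
Set Implicit Arguments. Unset Strict Implicit. Unset Printing Implicit Defensive.
Import Order.TTheory GRing.Theory Num.Theory.
Local Open Scope ring_scope.

Definition bits (n : nat) := {ffun 'I_n -> bool}.

Definition zeros n (x : bits n) : nat := #|[set i | ~~ x i]|.

Definition monotone_fun (R : realType) n (f : bits n -> R) : Prop :=
  forall x y : bits n, x != y -> (forall i, y i ==> x i) -> f y < f x.

Definition round_nat (R : realType) (lam : R) : nat := Num.truncn (lam + 2^-1).

Definition mut_prob (R : realType) n (c : R) (x y : bits n) : R :=
  \prod_(i < n) (if y i != x i then c / n%:R else 1 - c / n%:R).

Definition pop_prob (R : realType) n m (c : R) (x : bits n)
    (Y : {ffun 'I_m -> bits n}) : R :=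
  \prod_(j < m) mut_prob c x (Y j).

Definition winners (R : realType) n m (f : bits n -> R)
    (Y : {ffun 'I_m -> bits n}) : {set 'I_m} :=
  [set j | [forall k, f (Y k) <= f (Y j)]].

(* expectation of g(x^{t+1}) given the offspring Y: uniform tie-breaking *)
Definition select_exp (R : realType) n m (f : bits n -> R) (g : bits n -> R)
    (Y : {ffun 'I_m -> bits n}) : R :=
  (#|winners f Y|%:R)^-1 * \sum_(j in winners f Y) g (Y j).

(* E[ g(x^{t+1}) | x^t = x, lambda^t = lam ] for one generation of the
   SA-(1,lambda)-EA, fitness f^t = f *)
Definition next_exp (R : realType) n (c lam : R) (x : bits n)
    (f : bits n -> R) (g : bits n -> R) : R :=
  \sum_(Y : {ffun 'I_(round_nat lam) -> bits n})
     pop_prob c x Y * select_exp f g Y.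

(* Pr[B | x^t = x, lambda^t = lam]: some offspring flips a zero-bit of x *)
Definition probB (R : realType) n (c lam : R) (x : bits n) : R :=
  \sum_(Y : {ffun 'I_(round_nat lam) -> bits n}
          | [exists j, exists i, ~~ x i && Y j i])
     pop_prob c x Y.

From mathcomp Require Import all_boot all_order all_algebra.
From mathcomp Require Import all_classical all_reals all_analysis.
From mathcomp Require Import ring lra.
Import Order.TTheory GRing.Theory Num.Theory.
Local Open Scope ring_scope.
Set Implicit Arguments. Unset Strict Implicit. Unset Printing Implicit Defensive.

(* Write p = c/n, K = n - Z^t and theta = K p = c (1 - Z^t/n).  The random
   variable [the selected offspring x' sets a zero-bit of x] minus the number
   of one-bits of x lost in x' is below both Z^t - Z^{t+1} and its minimum
   with 1, so it suffices to bound its expectation from below.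
   An offspring flipping zero-bits but no one-bit beats x, and by monotonicity
   x beats every offspring flipping no zero-bit; so the first term is 1 with
   probability at least (1-p)^K Pr[B] >= e^{-2} Pr[B].
   Toggling a one-bit i of offspring j multiplies the probability of the
   population by p/(1-p) and can only lower the selection weight of j.  This
   bounds the expected weight of j with bit i lost by p times the expected
   weight of j with a zero-bit set, plus p times the probability that j wins
   without setting one, which forces every other offspring to differ from x.
   Summing over i and j bounds the expected loss by
   theta (E[first term] + lambda (1 - (1-p)^n)^(lambda-1)), and the last term
   is exponentially small in lambda because (1-p)^n >= e^{-2}. *)

Lemma natr_card_set (R : pzSemiRingType) (T : finType) (P : pred T) :
  (#|[set t | P t]|%:R : R) = \sum_t (P t)%:R.
Proof.
rewrite -sum1_card natr_sum big_mkcond /=; apply: eq_bigr => t _.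
by rewrite inE; case: (P t).
Qed.

Lemma prodr_nat_bool (R : comPzSemiRingType) (T : finType) (P : pred T) :
  \prod_t ((P t)%:R : R) = ([forall t, P t])%:R.
Proof.
case: (boolP [forall t, P t]) => [/forallP h|].
  by apply: big1 => t _; rewrite h.
rewrite negb_forall => /existsP[t /negbTE Pt].
by rewrite (bigD1 t) //= Pt mul0r.
Qed.

Section ElementaryBounds.
Variable R : realType.

Lemma ler_thin_trials (q b : R) m : 0 <= q <= 1 -> 0 <= b <= 1 ->
  q * (1 - (1 - b) ^+ m) <= 1 - (1 - q * b) ^+ m.
Proof.
move=> /andP[q0 q1] /andP[b0 b1]; elim: m => [|m IH]; first by rewrite !expr0; lra.
have le_pow : (1 - b) ^+ m <= (1 - q * b) ^+ m by apply: lerXn2r; rewrite ?nnegrE; nra.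
have pow_ge0 : 0 <= (1 - b) ^+ m by apply: exprn_ge0; lra.
have : q * b * (1 - b) ^+ m <= q * b * (1 - q * b) ^+ m by apply: ler_wpM2l; nra.
rewrite !exprSr; nra.
Qed.

Lemma expR_le_1B (t : R) : 0 <= t -> t <= 2^-1 -> expR (- (2 * t)) <= 1 - t.
Proof.
move=> t0 t1.
have := expR_ge1Dx (2 * t).
have : expR (- (2 * t)) * expR (2 * t) = 1 by rewrite -expRD addNr expR0.
have := expR_gt0 (- (2 * t)).
have : (1 + 2 * t) * (1 - t) >= 1 by nra.
nra.
Qed.

Lemma expR_le_1Bexpr (p : R) n k : (2 <= n)%N -> (k <= n)%N ->
  0 <= p -> p * n%:R <= 1 -> expR (-2) <= (1 - p) ^+ k.
Proof.
move=> n2 kn p0 pn.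
have n2R : 2 <= n%:R :> R by rewrite (ler_nat R 2 n).
have p2 : p <= 2^-1 by nra.
apply: (le_trans _ (ler_wiXn2l _ _ kn)); [|lra|lra].
have : expR (- (2 * p)) ^+ n <= (1 - p) ^+ n.
  by apply: lerXn2r; rewrite ?nnegrE ?expR_ge0 //; [lra|apply: expR_le_1B].
apply: le_trans; rewrite -expRM_natr ler_expR; nra.
Qed.

Lemma natr_expr_1B_le1 (t : R) m : 0 <= t < 1 -> m%:R * t ^+ m * (1 - t) <= 1.
Proof.
move=> /andP[t0 t1].
suff : m%:R * t ^+ m * (1 - t) <= 1 - t ^+ m by have := exprn_ge0 m t0; lra.
elim: m => [|m IH]; first by rewrite expr0 !mul0r; lra.
have u0 : 0 <= t ^+ m by apply: exprn_ge0.
have u1 : t ^+ m <= 1 by apply: exprn_ile1 => //; lra.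
have := ler_wpM2l t0 IH.
rewrite exprS -natr1; set u := t ^+ m in u0 u1 *.
have : 0 <= (1 - t) * (1 - t * u) by apply: mulr_ge0; nra.
nra.
Qed.

(* With s = (1 + r)/2 and t = r/s for r = 1 - e^{-2}: m r^(m-1) = m t^m s^m / r,
   where m t^m is bounded and s^m = e^{-b m} <= e^{b/2} e^{-b lam}. *)
Lemma geometric_tail_bound : exists a b : R, [/\ 0 < a, 0 < b &
  forall (lam r : R) (m : nat), (1 <= m)%N -> lam - 2^-1 <= m%:R ->
    0 <= r <= 1 - expR (-2) -> m%:R * r ^+ m.-1 <= a * expR (- (b * lam))].
Proof.
set r0 : R := 1 - expR (-2).
have e2_lt1 : expR (-2) < 1 :> R by rewrite expR_lt1; lra.
have e2_gt0 : 0 < expR (-2) :> R := expR_gt0 _.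
set s : R := (1 + r0) / 2.
have s0 : 0 < s by rewrite /s /r0; lra.
have s1 : s < 1 by rewrite /s /r0; lra.
set t : R := r0 / s.
have ts : t * s = r0 by rewrite /t divfK //; lra.
have t0 : 0 <= t by rewrite /t divr_ge0 //; rewrite /r0; lra.
have t1 : t < 1 by rewrite /t ltr_pdivrMr // /s /r0; lra.
have t01 : 0 <= t < 1 by rewrite t0 t1.
set b : R := - ln s.
have b0 : 0 < b by rewrite /b oppr_gt0 ln_lt0 // s0 s1.
have rt0 : 0 < r0 * (1 - t) by apply: mulr_gt0; rewrite /r0; lra.
exists (expR (b / 2) / (r0 * (1 - t))), b; split => //.
  by apply: divr_gt0; [exact: expR_gt0|].
move=> lam r m m1 lam_le /andP[r_ge0 r_le].
have sm0 : 0 <= s ^+ m by apply: exprn_ge0; lra.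
have smE : s ^+ m = expR (- (b * m%:R)) by rewrite /b mulNr opprK expRM_natr lnK.
have sm_le : s ^+ m <= expR (b / 2) * expR (- (b * lam)).
  by rewrite smE -expRD ler_expR; nra.
have rE : r0 * (m%:R * r0 ^+ m.-1) = m%:R * t ^+ m * s ^+ m.
  by rewrite mulrCA -exprS prednK // -ts exprMn mulrA.
have tm : m%:R * t ^+ m * s ^+ m * (1 - t) <= s ^+ m.
  by rewrite mulrAC; have := ler_wpM2r sm0 (natr_expr_1B_le1 m t01); rewrite mul1r.
apply: (@le_trans _ _ (m%:R * r0 ^+ m.-1)).
  by apply: ler_wpM2l; [exact: ler0n|apply: lerXn2r; rewrite ?nnegrE //; lra].
rewrite mulrAC ler_pdivlMr // mulrA [_ * r0]mulrC rE.
exact: le_trans tm sm_le.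
Qed.

End ElementaryBounds.

Section Toggle.
Variables n m : nat.

Definition toggle (y : bits n) (i : 'I_n) : bits n :=
  [ffun k => if k == i then ~~ y k else y k].

Lemma toggleK i : involutive (toggle^~ i).
Proof. by move=> y; apply/ffunP=> k; rewrite !ffunE; case: eqP => // ->; rewrite negbK. Qed.

Lemma toggle_id y i : toggle y i i = ~~ y i.
Proof. by rewrite ffunE eqxx. Qed.

Lemma toggle_ne y i k : k != i -> toggle y i k = y k.
Proof. by rewrite ffunE => /negbTE ->. Qed.

Definition toggle_at (Y : {ffun 'I_m -> bits n}) (j : 'I_m) (i : 'I_n) :
    {ffun 'I_m -> bits n} :=
  [ffun k => if k == j then toggle (Y k) i else Y k].

Lemma toggle_atK j i : involutive (fun Y => toggle_at Y j i).
Proof. by move=> Y; apply/ffunP=> k; rewrite !ffunE; case: eqP => // ->; rewrite toggleK. Qed.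

Lemma toggle_at_id Y j i : toggle_at Y j i j = toggle (Y j) i.
Proof. by rewrite ffunE eqxx. Qed.

Lemma toggle_at_ne Y j i k : k != j -> toggle_at Y j i k = Y k.
Proof. by rewrite ffunE => /negbTE ->. Qed.

End Toggle.

Section Mutation.
Variables (R : realType) (n : nat) (c : R) (x : bits n).
Hypotheses (c_ge0 : 0 <= c) (c_le1 : c <= 1).
Local Notation p := (c / n%:R).

Lemma mut_rate_ge0 : 0 <= p.
Proof. by rewrite divr_ge0. Qed.

(* For n = 0 the rate c / 0 is 0. *)
Lemma mut_rate_le1 : p <= 1.
Proof.
case: n => [|n']; first by rewrite invr0 mulr0.
by rewrite ler_pdivrMr ?ltr0Sn // mul1r (le_trans c_le1) // ler1n.
Qed.

Lemma mut_rate_1B_itv : 0 <= 1 - p <= 1.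
Proof. by rewrite subr_ge0 mut_rate_le1 gerBl mut_rate_ge0. Qed.

Lemma mut_rate_mulr_le1 : p * n%:R <= 1.
Proof.
case: (posnP n) => [->|n_gt0]; first by rewrite mulr0.
by rewrite divfK // pnatr_eq0 -lt0n.
Qed.

Lemma mut_prob_ge0 y : 0 <= mut_prob c x y.
Proof.
rewrite /mut_prob; apply: prodr_ge0 => i _.
by case: ifP => _; [exact: mut_rate_ge0|rewrite subr_ge0 mut_rate_le1].
Qed.

Lemma mut_prob_sum1 : \sum_y mut_prob c x y = 1.
Proof.
rewrite /mut_prob -(bigA_distr_bigA (fun i (b : bool) => if b != x i then p else 1 - p)).
by apply: big1 => i _; rewrite big_bool /=; case: (x i) => /=; ring.
Qed.

Lemma mut_prob_copy : mut_prob c x x = (1 - p) ^+ n.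
Proof.
rewrite /mut_prob (eq_bigr (fun _ => 1 - p)) => [|i _]; last by rewrite eqxx.
by rewrite prodr_const card_ord.
Qed.

Lemma mut_prob_toggle (y : bits n) i : y i = x i ->
  mut_prob c x (toggle y i) * (1 - p) = p * mut_prob c x y.
Proof.
move=> yi; rewrite /mut_prob (bigD1 i) //= [in RHS](bigD1 i) //=.
rewrite toggle_id yi eqxx /= -yi.
have -> : (~~ y i != y i) = true by case: (y i).
under eq_bigr => k /negbTE ki do rewrite toggle_ne ?ki //.
ring.
Qed.

Lemma sum_mut_prob_keep (E : pred (bits n)) i :
  (forall y, E (toggle y i) = E y) ->
  \sum_(y | E y && (y i == x i)) mut_prob c x y
    = (1 - p) * \sum_(y | E y) mut_prob c x y.
Proof.
move=> Ei; rewrite [in RHS](bigID (fun y : bits n => y i == x i)) /=.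
set A := \sum_(y | E y && (y i == x i)) _.
set U := \sum_(y | E y && ~~ (y i == x i)) _.
suff UA : (1 - p) * U = p * A by rewrite mulrDr UA; ring.
rewrite /U mulr_sumr (reindex_inj (inv_inj (toggleK i))) /= /A mulr_sumr.
apply: eq_big => y; first by rewrite Ei toggle_id; case: (y i); case: (x i).
move=> /andP[_ yi]; rewrite mulrC mut_prob_toggle //.
by move: yi; rewrite toggle_id; case: (y i); case: (x i).
Qed.

Definition flips_zero (y : bits n) : bool := [exists i, ~~ x i && y i].

Definition flips_only_zeros (y : bits n) : bool :=
  flips_zero y && [forall i, x i ==> y i].

Lemma flips_zero_toggle (y : bits n) i : x i -> flips_zero (toggle y i) = flips_zero y.
Proof.
move=> xi; apply/existsP/existsP => -[k /andP[xk yk]]; exists k; rewrite xk /=;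
  by move: yk; rewrite ?ffunE; case: eqP => // ek; move: xk; rewrite ek xi.
Qed.

Lemma flips_zeroPn (y : bits n) : ~~ flips_zero y -> forall i, y i ==> x i.
Proof.
move=> h i; apply/implyP => yi; apply/negPn/negP => xi.
by move: h; rewrite negb_exists => /forallP /(_ i); rewrite xi yi.
Qed.

Lemma sum_mut_prob_keep_all (s : seq 'I_n) : uniq s -> all x s ->
  \sum_(y | flips_zero y && all (fun i => y i == x i) s) mut_prob c x y
    = (1 - p) ^+ size s * \sum_(y | flips_zero y) mut_prob c x y.
Proof.
elim: s => [|i s IH] /=.
  by move=> _ _; rewrite expr0 mul1r; apply: eq_bigl => y; rewrite andbT.
move=> /andP[i_notin_s s_uniq] /andP[xi xs].
rewrite exprS -mulrA -IH //.
rewrite -(sum_mut_prob_keep (E := fun y => flips_zero y && all (fun i => y i == x i) s) (i := i)).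
  by apply: eq_bigl => y; rewrite -andbA [_ && (y i == _)]andbC.
move=> y; rewrite flips_zero_toggle //; congr (_ && _).
by apply: eq_in_all => k ks; rewrite toggle_ne //; apply: contraNneq i_notin_s => <-.
Qed.

Lemma sum_mut_prob_flips_only_zeros :
  \sum_(y | flips_only_zeros y) mut_prob c x y
  = (1 - p) ^+ #|[set i | x i]| * \sum_(y | flips_zero y) mut_prob c x y.
Proof.
rewrite cardE -sum_mut_prob_keep_all ?enum_uniq //; last first.
  by apply/allP => i; rewrite mem_enum inE.
apply: eq_bigl => y; congr (_ && _); apply/forallP/allP => h i.
  by rewrite mem_enum inE => xi; move: (h i); rewrite xi /= => ->.
by apply/implyP => xi; have := h i; rewrite mem_enum inE xi => /(_ isT) /eqP ->.
Qed.

Lemma sum_mut_prob_le1 (P : pred (bits n)) : \sum_(y | P y) mut_prob c x y <= 1.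
Proof.
rewrite -mut_prob_sum1 [leRHS](bigID P) /= lerDl.
by apply: sumr_ge0 => y _; exact: mut_prob_ge0.
Qed.

Lemma card_ones_add_zeros : (#|[set i | x i]| + zeros x)%N = n.
Proof.
rewrite /zeros -[RHS](card_ord n) -(cardsC [set i | x i]); congr (_ + _)%N.
by apply: eq_card => i; rewrite !inE.
Qed.

Lemma sum_ones_mut_rate : \sum_(i | x i) p = #|[set i | x i]|%:R * p.
Proof.
rewrite natr_card_set mulr_suml [LHS]big_mkcond /=; apply: eq_bigr => i _.
by case: (x i); rewrite ?mul1r ?mul0r.
Qed.

Lemma sum_ones_mut_rateE : (0 < n)%N ->
  \sum_(i | x i) p = c * (1 - (zeros x)%:R / n%:R).
Proof.
move=> n_gt0; rewrite sum_ones_mut_rate.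
have nE : n%:R = #|[set i | x i]|%:R + (zeros x)%:R :> R by rewrite -natrD card_ones_add_zeros.
have n_neq0 : n%:R != 0 :> R by rewrite pnatr_eq0 -lt0n.
by move: n_neq0; rewrite nE => n_neq0; field.
Qed.

Lemma sum_ones_mut_rate_le1 : \sum_(i | x i) p <= 1.
Proof.
case: (posnP n) => [n0|n_gt0]; first by rewrite big1 // => i _; rewrite n0 invr0 mulr0.
rewrite sum_ones_mut_rateE //; apply: le_trans c_le1.
by rewrite ler_piMr // gerBl divr_ge0.
Qed.

Lemma keep_ones_prob_ge : (0 < zeros x)%N ->
  expR (-2) <= (1 - p) ^+ #|[set i | x i]|.
Proof.
move=> Zx_gt0; have nE := card_ones_add_zeros.
case: (ltnP 1 n) => [n_gt1|n_le1].
  apply: (expR_le_1Bexpr n_gt1 (leq_trans (leq_addr _ _) (eq_leq nE))).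
    exact: mut_rate_ge0.
  exact: mut_rate_mulr_le1.
have -> : #|[set i | x i]| = 0%N.
  by apply/eqP; rewrite -leqn0 -(leq_add2r (zeros x)) nE add0n (leq_trans n_le1).
by rewrite expr0 expR_le1; lra.
Qed.

Lemma copy_prob_ge : (1 < n)%N -> expR (-2) <= mut_prob c x x.
Proof.
move=> n_gt1; rewrite mut_prob_copy.
by apply: (expR_le_1Bexpr n_gt1); rewrite ?mut_rate_ge0 ?mut_rate_mulr_le1.
Qed.

Lemma sum_ones_copy_tail_le m (B : R) : (0 < zeros x)%N -> 0 <= B ->
  (forall r, 0 <= r <= 1 - expR (-2) -> m%:R * r ^+ m.-1 <= B) ->
  (\sum_(i | x i) p) * (m%:R * (1 - mut_prob c x x) ^+ m.-1) <= B.
Proof.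
move=> Zx_gt0 B_ge0 tail.
case: (posnP #|[set i | x i]|) => [K0|K_gt0]; first by rewrite sum_ones_mut_rate K0 !mul0r.
have n_gt1 : (1 < n)%N by rewrite -card_ones_add_zeros (leq_add K_gt0 Zx_gt0).
have q_ge := copy_prob_ge n_gt1.
have q_le1 : mut_prob c x x <= 1.
  by case/andP: mut_rate_1B_itv => ? ?; rewrite mut_prob_copy exprn_ile1.
apply: le_trans (tail (1 - mut_prob c x x) _); last by apply/andP; split; lra.
rewrite -[leRHS]mul1r ler_wpM2r ?sum_ones_mut_rate_le1 //.
by rewrite mulr_ge0 ?exprn_ge0 // subr_ge0.
Qed.

End Mutation.

Section Population.
Variables (R : realType) (n m : nat) (c : R) (x : bits n).
Hypotheses (c_ge0 : 0 <= c) (c_le1 : c <= 1).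
Local Notation p := (c / n%:R).
Local Notation pop := {ffun 'I_m -> bits n}.

Lemma pop_prob_ge0 (Y : pop) : 0 <= pop_prob c x Y.
Proof. by apply: prodr_ge0 => j _; apply: mut_prob_ge0. Qed.

Lemma pop_prob_toggle_at (Y : pop) j i : Y j i = x i ->
  pop_prob c x (toggle_at Y j i) * (1 - p) = p * pop_prob c x Y.
Proof.
move=> yi; rewrite /pop_prob (bigD1 j) //= [in RHS](bigD1 j) //= toggle_at_id.
under eq_bigr => k /negbTE kj do rewrite toggle_at_ne ?kj //.
by rewrite mulrAC mut_prob_toggle //; ring.
Qed.

(* Pair each population with the one obtained by toggling bit i of offspring j. *)
Lemma sum_pop_prob_toggled_le (phi : pop -> R) (j : 'I_m) (i : 'I_n) :
  (forall Y, 0 <= phi Y) ->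
  (forall Y : pop, Y j i = x i -> phi (toggle_at Y j i) <= phi Y) ->
  \sum_(Y : pop | Y j i != x i) pop_prob c x Y * phi Y
    <= p * \sum_(Y : pop) pop_prob c x Y * phi Y.
Proof.
move=> phi_ge0 phi_toggle.
have p0 := mut_rate_ge0 n c_ge0; have p1 := mut_rate_le1 n c_le1.
rewrite [X in _ <= _ * X](bigID (fun Y : pop => Y j i != x i)) /=.
set A := \sum_(Y | _ != _) _; set U := \sum_(Y | ~~ (_ != _)) _.
suff : (1 - p) * A <= p * U by rewrite mulrBl mul1r mulrDr; lra.
rewrite /A mulr_sumr (reindex_inj (inv_inj (toggle_atK j i))) /= /U mulr_sumr.
rewrite (eq_bigl (fun Y : pop => ~~ (Y j i != x i))) => [|Y]; last first.
  by rewrite toggle_at_id toggle_id; case: (Y j i); case: (x i).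
apply: ler_sum => Y /negPn /eqP yi.
rewrite mulrCA mulrA pop_prob_toggle_at // -[_ * _ * phi _]mulrA.
apply: ler_wpM2l => //.
by apply: ler_wpM2l; [apply: pop_prob_ge0|apply: phi_toggle].
Qed.

Lemma sum_pop_prob_prod (A : 'I_m -> pred (bits n)) :
  \sum_(Y : pop) pop_prob c x Y * \prod_j ((A j (Y j))%:R : R)
    = \prod_j \sum_(y | A j y) mut_prob c x y.
Proof.
transitivity (\sum_(Y : pop) \prod_j (mut_prob c x (Y j) * ((A j (Y j))%:R : R))).
  by apply: eq_bigr => Y _; rewrite big_split.
rewrite -(bigA_distr_bigA (fun j y => mut_prob c x y * (A j y)%:R)).
apply: eq_bigr => j _; rewrite [RHS]big_mkcond /=; apply: eq_bigr => y _.
by case: (A j y); rewrite ?mulr1 ?mulr0.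
Qed.

Lemma pop_prob_sum1 : \sum_(Y : pop) pop_prob c x Y = 1.
Proof.
transitivity (\sum_(Y : pop) pop_prob c x Y * \prod_(j < m) (true%:R : R)).
  by apply: eq_bigr => Y _; rewrite big1 ?mulr1.
rewrite (sum_pop_prob_prod (fun _ _ => true)).
by apply: big1 => j _; apply: mut_prob_sum1.
Qed.

Lemma sum_pop_prob_exists (A : pred (bits n)) :
  \sum_(Y : pop | [exists j, A (Y j)]) pop_prob c x Y
    = 1 - (1 - \sum_(y | A y) mut_prob c x y) ^+ m.
Proof.
have -> : 1 - \sum_(y | A y) mut_prob c x y = \sum_(y | ~~ A y) mut_prob c x y.
  by rewrite -(mut_prob_sum1 c x) (bigID A) /=; ring.
rewrite -[m in _ ^+ m]card_ord -prodr_const -(sum_pop_prob_prod (fun _ y => ~~ A y)).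
set E := fun Y : pop => [exists j, A (Y j)].
have prod0 Y : E Y -> pop_prob c x Y * \prod_j ((~~ A (Y j))%:R : R) = 0.
  move=> /existsP[j Aj]; rewrite (prodr_nat_bool _ (fun k => ~~ A (Y k))).
  suff -> : [forall k, ~~ A (Y k)] = false by rewrite mulr0.
  by apply/negbTE; rewrite negb_forall; apply/existsP; exists j; rewrite negbK.
have prod1 Y : ~~ E Y -> pop_prob c x Y * \prod_j ((~~ A (Y j))%:R : R) = pop_prob c x Y.
  by rewrite negb_exists (prodr_nat_bool _ (fun k => ~~ A (Y k))) => ->; rewrite mulr1.
rewrite -[X in _ = X - _]pop_prob_sum1 [in RHS](bigID E) [X in _ - X](bigID E) /=.
by rewrite (eq_bigr _ prod0) (eq_bigr _ prod1) big1_eq add0r addrK.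
Qed.

Definition no_other_copy (j : 'I_m) (Y : pop) : bool :=
  [forall k, (k == j) || (Y k != x)].

Lemma sum_pop_prob_no_other_copy j :
  \sum_(Y : pop) pop_prob c x Y * (no_other_copy j Y)%:R
    = (1 - mut_prob c x x) ^+ m.-1.
Proof.
under eq_bigr => Y _ do rewrite -(prodr_nat_bool _ (fun k => (k == j) || (Y k != x))).
rewrite (sum_pop_prob_prod (fun k y => (k == j) || (y != x))) (bigD1 j) //=.
rewrite (eq_bigl predT) ?mut_prob_sum1 ?mul1r => [|y]; last by rewrite eqxx.
rewrite (eq_bigr (fun _ => 1 - mut_prob c x x)) => [|k /negbTE kj].
  by rewrite prodr_const cardC1 card_ord.
rewrite (eq_bigl (fun y => y != x)) => [|y]; last by rewrite kj.
by have := mut_prob_sum1 c x; rewrite (bigD1 x) //= => <-; rewrite addrAC subrr add0r.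
Qed.

End Population.

Section Selection.
Variables (R : realType) (n m : nat) (f : bits n -> R).
Local Notation pop := {ffun 'I_m -> bits n}.

Definition sel_weight (Y : pop) (j : 'I_m) : R :=
  if j \in winners f Y then (#|winners f Y|%:R)^-1 else 0.

Lemma select_expE g (Y : pop) : select_exp f g Y = \sum_j sel_weight Y j * g (Y j).
Proof.
rewrite /select_exp mulr_sumr big_mkcond /=; apply: eq_bigr => j _.
by rewrite /sel_weight; case: ifP; rewrite ?mul0r.
Qed.

Lemma sel_weight_ge0 Y j : 0 <= sel_weight Y j.
Proof. by rewrite /sel_weight; case: ifP => // _; rewrite invr_ge0 ler0n. Qed.

Lemma sel_weight_le1 Y j : sel_weight Y j <= 1.
Proof.
rewrite /sel_weight; case: ifP => // jw.
have : (1 <= #|winners f Y|)%N by apply/card_gt0P; exists j.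
by rewrite -(ler_nat R) => h; rewrite invf_le1 // (lt_le_trans ltr01).
Qed.

Lemma winners_card_gt0 (Y : pop) : (0 < m)%N -> (0 < #|winners f Y|)%N.
Proof.
case: m Y => // m' Y _; apply/card_gt0P.
case: (@arg_maxP _ _ 'I_m'.+1 ord0 predT (fun j => f (Y j))) => // j _ h.
by exists j; rewrite inE; apply/forallP => k; exact: h.
Qed.

Lemma sel_weight_sum1 (Y : pop) : (0 < m)%N -> \sum_j sel_weight Y j = 1.
Proof.
move=> m0; rewrite /sel_weight -big_mkcond /= sumr_const -[_ *+ _]mulr_natr mulVf //.
by rewrite pnatr_eq0 -lt0n winners_card_gt0.
Qed.

Hypothesis f_mono : monotone_fun f.

Lemma monotone_fun_le (y z : bits n) : (forall i, y i ==> z i) -> f y <= f z.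
Proof. by move=> yz; case: (eqVneq z y) => [->//|ne]; apply/ltW/f_mono. Qed.

Lemma monotone_fun_toggle_lt (y : bits n) i : y i -> f (toggle y i) < f y.
Proof.
move=> yi; apply: f_mono.
  by apply/eqP => /ffunP /(_ i); rewrite toggle_id yi.
by move=> k; rewrite ffunE; case: eqP => [->|_]; rewrite ?yi ?implybb.
Qed.

(* Lowering the fitness of offspring j can only make j lose the selection. *)
Lemma sel_weight_toggle_at (Y : pop) j i :
  Y j i -> sel_weight (toggle_at Y j i) j <= sel_weight Y j.
Proof.
move=> yi; rewrite {1}/sel_weight; case: ifP => [jw|_]; last exact: sel_weight_ge0.
have lt_others k : k != j -> f (Y k) < f (Y j).
  move=> kj; move: jw; rewrite inE => /forallP /(_ k).
  rewrite toggle_at_ne // toggle_at_id => /le_lt_trans; apply.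
  exact: monotone_fun_toggle_lt.
have wY : winners f Y = [set j].
  apply/setP => k; rewrite !inE; case: (eqVneq k j) => [->|kj].
    by apply/forallP => k'; case: (eqVneq k' j) => [->//|k'j]; exact/ltW/lt_others.
  by apply/negbTE; rewrite negb_forall; apply/existsP; exists j; rewrite -ltNge lt_others.
rewrite [X in _ <= X]/sel_weight wY inE eqxx cards1 invr1.
by have := sel_weight_le1 (toggle_at Y j i) j; rewrite /sel_weight jw.
Qed.

Variable x : bits n.

(* Such an offspring beats x, which beats every offspring flipping no zero-bit. *)
Lemma winner_flips_zero (Y : pop) j k :
  flips_only_zeros x (Y j) -> k \in winners f Y -> flips_zero x (Y k).
Proof.
move=> /andP[fz /forallP up] kw; apply: contraT => /flips_zeroPn nfz.
have le_x : f (Y k) <= f x by apply: monotone_fun_le.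
have x_lt : f x < f (Y j).
  apply: f_mono => //; apply/eqP => e; move: fz; rewrite e.
  by case/existsP => i; rewrite andNb.
move: kw; rewrite inE => /forallP /(_ j) kj.
by have := lt_le_trans x_lt (le_trans kj le_x); rewrite ltxx.
Qed.

Lemma sel_weight_beaten_by_copy (Y : pop) j k i :
  ~~ flips_zero x (Y j) -> x i -> ~~ Y j i -> k != j -> Y k = x ->
  sel_weight Y j = 0.
Proof.
move=> /flips_zeroPn nfz xi yi kj yk.
have lt_x : f (Y j) < f x.
  by apply: f_mono => //; apply/eqP => /ffunP /(_ i); rewrite (negbTE yi) xi.
rewrite /sel_weight; case: ifP => // /[!inE] /forallP /(_ k); rewrite yk => x_le.
by have := lt_le_trans lt_x x_le; rewrite ltxx.
Qed.

End Selection.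

Definition pop_exp (R : realType) n m (c : R) (x : bits n) (f g : bits n -> R) : R :=
  \sum_(Y : {ffun 'I_m -> bits n}) pop_prob c x Y * select_exp f g Y.

Lemma next_expE (R : realType) n (c lam : R) (x : bits n) (f g : bits n -> R) :
  next_exp c lam x f g = pop_exp (round_nat lam) c x f g.
Proof. by []. Qed.

Definition lost_ones n (x y : bits n) : nat := #|[set i | x i && ~~ y i]|.

Definition capped_gain (R : realType) n (x y : bits n) : R :=
  (flips_zero x y)%:R - (lost_ones x y)%:R.

Lemma zeros_subE (R : realType) n (x y : bits n) :
  (zeros x)%:R - (zeros y)%:R = \sum_i (~~ x i && y i)%:R - (lost_ones x y)%:R :> R.
Proof.
rewrite /zeros /lost_ones !natr_card_set -!sumrB.
by apply: eq_bigr => i _; case: (x i); case: (y i); rewrite /= ?subrr ?sub0r ?subr0.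
Qed.

Lemma capped_gain_le (R : realType) n (x y : bits n) :
  capped_gain R x y <= (zeros x)%:R - (zeros y)%:R.
Proof.
rewrite zeros_subE lerD2r; case: (boolP (flips_zero x y)) => [/existsP[i xyi]|_].
  by rewrite (bigD1 i) //= xyi lerDl sumr_ge0.
exact: sumr_ge0.
Qed.

Lemma capped_gain_le_min1 (R : realType) n (x y : bits n) :
  capped_gain R x y <= Num.min 1 ((zeros x)%:R - (zeros y)%:R).
Proof.
rewrite le_min capped_gain_le andbT /capped_gain.
have : (flips_zero x y)%:R <= 1 :> R by rewrite lern1 leq_b1.
by have := ler0n R (lost_ones x y); lra.
Qed.

Lemma natr_lost_ones (R : realType) n (x y : bits n) :
  (lost_ones x y)%:R = \sum_(i | x i) (~~ y i)%:R :> R.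
Proof.
rewrite natr_card_set [RHS]big_mkcond /=.
by apply: eq_bigr => i _; case: (x i).
Qed.

Section Drift.
Variables (R : realType) (n m : nat) (c : R) (x : bits n) (f : bits n -> R).
Hypotheses (c_ge0 : 0 <= c) (c_le1 : c <= 1) (f_mono : monotone_fun f).
Local Notation p := (c / n%:R).
Local Notation pop := {ffun 'I_m -> bits n}.
Local Notation E g := (pop_exp m c x f g).

Lemma pop_exp_le (g h : bits n -> R) : (forall y, h y <= g y) -> E h <= E g.
Proof.
move=> hg; apply: ler_sum => Y _; apply: ler_wpM2l; first exact: pop_prob_ge0.
by rewrite !select_expE; apply: ler_sum => j _; apply: ler_wpM2l; [exact: sel_weight_ge0|].
Qed.

Lemma pop_expB (g h : bits n -> R) : E (fun y => g y - h y) = E g - E h.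
Proof.
rewrite /pop_exp -sumrB; apply: eq_bigr => Y _.
by rewrite !select_expE -mulrBr -sumrB; congr (_ * _); apply: eq_bigr => j _; rewrite mulrBr.
Qed.

Lemma pop_exp_flips_zero_ge : (0 < m)%N ->
  \sum_(Y : pop | [exists j, flips_only_zeros x (Y j)]) pop_prob c x Y
    <= E (fun y => (flips_zero x y)%:R).
Proof.
move=> m_gt0; rewrite [X in _ <= X](bigID (fun Y : pop => [exists j, flips_only_zeros x (Y j)])) /=.
rewrite -[X in X <= _]addr0; apply: lerD; last first.
  apply: sumr_ge0 => Y _; apply: mulr_ge0; first exact: pop_prob_ge0.
  by rewrite select_expE; apply: sumr_ge0 => j _; apply: mulr_ge0; [exact: sel_weight_ge0|].
apply: ler_sum => Y /existsP[j0 j0_only].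
suff -> : select_exp f (fun y => (flips_zero x y)%:R) Y = 1 by rewrite mulr1.
rewrite select_expE -[RHS](sel_weight_sum1 f Y m_gt0); apply: eq_bigr => j _.
rewrite /sel_weight; case: ifP => jw; last by rewrite mul0r.
by rewrite (winner_flips_zero f_mono j0_only jw) mulr1.
Qed.

Lemma sum_sel_weight_lost_one_le j i : x i ->
  \sum_(Y : pop) pop_prob c x Y * (sel_weight f Y j * (~~ Y j i)%:R)
  <= p * \sum_(Y : pop) pop_prob c x Y * (sel_weight f Y j * (flips_zero x (Y j))%:R)
     + p * (1 - mut_prob c x x) ^+ m.-1.
Proof.
move=> xi.
pose gains (Y : pop) := sel_weight f Y j * (flips_zero x (Y j))%:R.
pose lone (Y : pop) :=
  sel_weight f Y j * (~~ flips_zero x (Y j))%:R * (no_other_copy x j Y)%:R.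
have gains_ge0 Y : 0 <= gains Y by apply: mulr_ge0; [exact: sel_weight_ge0|].
have lone_ge0 Y : 0 <= lone Y by rewrite !mulr_ge0 ?sel_weight_ge0.
have split_lost Y :
    sel_weight f Y j * (~~ Y j i)%:R <= (gains Y + lone Y) * (Y j i != x i)%:R.
  rewrite xi; case: (boolP (Y j i)) => yji /=; first by rewrite !mulr0.
  rewrite !mulr1 /gains /lone; case: (boolP (flips_zero x (Y j))) => fz /=.
    by rewrite !mulr1 !mulr0 mul0r addr0.
  rewrite mulr0 add0r mulr1; case: (boolP (no_other_copy x j Y)) => [_|]; first by rewrite mulr1.
  rewrite negb_forall => /existsP[k]; rewrite negb_or negbK => /andP[kj /eqP yk].
  by rewrite (sel_weight_beaten_by_copy f_mono fz xi yji kj yk) !mul0r.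
have toggle_le (Y : pop) : Y j i = x i ->
    gains (toggle_at Y j i) + lone (toggle_at Y j i) <= gains Y + lone Y.
  move=> yi; have le_w := sel_weight_toggle_at f_mono (etrans yi xi).
  have nc_toggle : no_other_copy x j (toggle_at Y j i) = no_other_copy x j Y.
    by apply: eq_forallb => k; case: (eqVneq k j) => // kj; rewrite toggle_at_ne.
  rewrite /gains /lone toggle_at_id flips_zero_toggle // nc_toggle.
  by apply: lerD; rewrite ?ler_wpM2r ?ler0n.
have lone_le : \sum_(Y : pop) pop_prob c x Y * lone Y <= (1 - mut_prob c x x) ^+ m.-1.
  rewrite -(sum_pop_prob_no_other_copy c x j); apply: ler_sum => Y _.
  rewrite ler_wpM2l ?pop_prob_ge0 // /lone ler_piMl ?ler0n // -[leRHS]mul1r.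
  by rewrite ler_pM ?sel_weight_ge0 ?sel_weight_le1 ?ler0n ?lern1 ?leq_b1.
apply: le_trans (_ : \sum_(Y : pop | Y j i != x i) pop_prob c x Y * (gains Y + lone Y) <= _).
  rewrite [X in _ <= X]big_mkcond /=; apply: ler_sum => Y _.
  apply: le_trans (ler_wpM2l _ (split_lost Y)) _; first exact: pop_prob_ge0.
  by case: (Y j i != x i); rewrite ?mulr1 ?mulr0.
have phi_ge0 Y : 0 <= gains Y + lone Y by apply: addr_ge0.
apply: le_trans (sum_pop_prob_toggled_le c_ge0 c_le1 phi_ge0 toggle_le) _.
under eq_bigr => Y _ do rewrite mulrDr.
rewrite big_split mulrDr lerD2l ler_wpM2l //; exact: mut_rate_ge0.
Qed.

Lemma pop_exp_lost_ones_le :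
  E (fun y => (lost_ones x y)%:R)
  <= (\sum_(i | x i) p) *
     (E (fun y => (flips_zero x y)%:R) + m%:R * (1 - mut_prob c x x) ^+ m.-1).
Proof.
have sel_weightE g : E g = \sum_j \sum_(Y : pop) pop_prob c x Y * (sel_weight f Y j * g (Y j)).
  rewrite exchange_big; apply: eq_bigr => Y _; rewrite select_expE mulr_sumr.
  by apply: eq_bigr.
rewrite !sel_weightE.
under eq_bigr => j _ do under eq_bigr => Y _ do
  rewrite natr_lost_ones mulr_sumr mulr_sumr.
under eq_bigr => j _ do rewrite exchange_big /=.
apply: le_trans (ler_sum _ (fun j _ => ler_sum _ (fun i xi => sum_sel_weight_lost_one_le j xi))) _.
rewrite le_eqVlt; apply/predU1l.
rewrite exchange_big /= mulrDr !mulr_suml -big_split /=; apply: eq_bigr => i _.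
by rewrite big_split /= -mulr_sumr sumr_const card_ord -mulr_natl; ring.
Qed.

Lemma pop_exp_capped_gain_ge : (0 < m)%N -> (0 < zeros x)%N ->
  (1 - \sum_(i | x i) p) *
     (expR (-2) * (1 - (1 - \sum_(y | flips_zero x y) mut_prob c x y) ^+ m))
  - (\sum_(i | x i) p) * (m%:R * (1 - mut_prob c x x) ^+ m.-1)
  <= E (capped_gain R x).
Proof.
move=> m_gt0 Zx_gt0.
set theta := \sum_(i | x i) p; set beta := \sum_(y | flips_zero x y) mut_prob c x y.
have theta_ge0 : 0 <= theta by apply: sumr_ge0 => i _; exact: mut_rate_ge0.
have theta_le1 : theta <= 1 by apply: sum_ones_mut_rate_le1.
have gained_ge : expR (-2) * (1 - (1 - beta) ^+ m) <= E (fun y => (flips_zero x y)%:R).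
  apply: le_trans (pop_exp_flips_zero_ge m_gt0).
  rewrite sum_pop_prob_exists sum_mut_prob_flips_only_zeros.
  have beta01 : 0 <= beta <= 1.
    by rewrite sum_mut_prob_le1 ?sumr_ge0 // => y _; exact: mut_prob_ge0.
  have keep01 : 0 <= (1 - p) ^+ #|[set i | x i]| <= 1.
    by case/andP: (mut_rate_1B_itv n c_ge0 c_le1) => ? ?; rewrite exprn_ge0 ?exprn_ile1.
  apply: le_trans (ler_thin_trials m keep01 beta01); apply: ler_wpM2r.
    by rewrite subr_ge0 exprn_ile1 // ?subr_ge0 ?gerBl; case/andP: beta01.
  exact: keep_ones_prob_ge.
have lost_le := pop_exp_lost_ones_le; rewrite -/theta in lost_le.
rewrite /capped_gain pop_expB.
set G := E _ in gained_ge lost_le *; set L := E _ in lost_le *.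
set Q := m%:R * _ in lost_le *.
have : 0 <= (1 - theta) * (G - expR (-2) * (1 - (1 - beta) ^+ m)).
  by apply: mulr_ge0; rewrite subr_ge0.
nra.
Qed.

End Drift.

Lemma round_nat_gt0 (R : realType) (lam : R) : 1 <= lam -> (0 < round_nat lam)%N.
Proof.
move=> lam_ge1; rewrite /round_nat truncn_gt0.
have : (0 : R) < 2^-1 by rewrite invr_gt0.
lra.
Qed.

Lemma round_nat_ge (R : realType) (lam : R) : 0 <= lam -> lam - 2^-1 <= (round_nat lam)%:R.
Proof.
move=> lam_ge0; have h2 : (0 : R) < 2^-1 by rewrite invr_gt0.
have := @truncn_itv R (lam + 2^-1); rewrite /round_nat.
case/(_ _)/andP => [|_]; first lra.
rewrite -natr1 => h; set t := (1 + 1 : R)^-1 in h *.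
have : t + t = 1 by rewrite /t; field.
lra.
Qed.

Lemma next_exp_capped_gain_ge (R : realType) (c : R) : 0 <= c -> c <= 1 ->
  exists a b : R, [/\ 0 < a, 0 < b &
  forall n (x : bits n) (lam : R) (f : bits n -> R),
    1 <= lam -> monotone_fun f -> (0 < zeros x)%N ->
    probB c lam x * (expR (-2) * (1 - c * (1 - (zeros x)%:R / n%:R)))
      - a * expR (- (b * lam)) <= next_exp c lam x f (capped_gain R x)].
Proof.
move=> c_ge0 c_le1; have [a [b [a_gt0 b_gt0 tail]]] := geometric_tail_bound R.
exists a, b; split => // n x lam f lam_ge1 f_mono Zx_gt0.
have m_gt0 := round_nat_gt0 lam_ge1.
have n_gt0 : (0 < n)%N.
  by rewrite -(card_ones_add_zeros x) (leq_trans Zx_gt0) ?leq_addl.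
have err := sum_ones_copy_tail_le c_ge0 c_le1 Zx_gt0 (ltW (mulr_gt0 a_gt0 (expR_gt0 _)))
  (fun r => tail lam r _ m_gt0 (round_nat_ge (le_trans ler01 lam_ge1))).
have probBE := @sum_pop_prob_exists R n (round_nat lam) c x (flips_zero x).
rewrite next_expE; apply: le_trans (pop_exp_capped_gain_ge c_ge0 c_le1 f_mono m_gt0 Zx_gt0).
rewrite -(sum_ones_mut_rateE c x n_gt0) [probB _ _ _]probBE.
lra.
Qed.

Theorem mainTheorem10 (R : realType) (c : R) :
  0 < c -> c <= 1 ->
  exists a1 a2 b : R, [/\ 0 < a1, 0 < a2 & 0 < b] /\
  forall (F s : R), 1 < F -> 0 < s ->
  forall (n : nat) (x : bits n) (lam : R) (f : bits n -> R),
    1 <= lam -> monotone_fun f -> (0 < zeros x)%N ->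
    let Zt := (zeros x)%:R in
    let rhs := probB c lam x * (a1 * (1 - c * (1 - Zt / n%:R)))
               - a2 * expR (- (b * lam)) in
    next_exp c lam x f (fun y => Zt - (zeros y)%:R) >= rhs /\
    next_exp c lam x f (fun y => Num.min 1 (Zt - (zeros y)%:R)) >= rhs.
Proof.
move=> c_gt0 c_le1.
have [a2 [b [a2_gt0 b_gt0 gain_ge]]] := next_exp_capped_gain_ge (ltW c_gt0) c_le1.
exists (expR (-2)), a2, b; split; first by split => //; exact: expR_gt0.
(* F and s only govern the update of lambda, not the generation considered here. *)
move=> F s _ _ n x lam f lam_ge1 f_mono Zx_gt0 Zt rhs; rewrite {}/rhs {}/Zt.
have le_gain := gain_ge n x lam f lam_ge1 f_mono Zx_gt0.
split; apply: (le_trans le_gain); rewrite !next_expE.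
all: apply: (pop_exp_le _ x f (ltW c_gt0) c_le1) => y.
  exact: capped_gain_le.
exact: capped_gain_le_min1.
Qed.
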